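(* Let $k\ge1$, let $r\in\mathbb{Z}_k^*$ (represented by an integer $1\le r<k$ when used as an exponent), let $\varphi:\mathbb{Z}_k\to\mathbb{Z}_k$, $x\mapsto xr$, be the corresponding automorphism of the additive group $\mathbb{Z}_k$, let $m$ be the multiplicative order of $r$ in $\mathbb{Z}_k$, and let $n$ be a positive multiple of $m$. Then the extended power functions $\Pi:\mathbb{Z}_k\to\mathbb{Z}_n$ of $\varphi$ are exactly the functions \[ \Pi_{r,s,t}(x)\equiv1+ms\sum_{i=1}^{x}t^{i-1}\pmod n,\qquad x\in\mathbb{Z}_k\ (\text{represented by } 0\le x<k), \] where $s\in\mathbb{Z}_{n/m}$ and $t\in\mathbb{Z}_{n/m}^*$ satisfy: (a) $t^{r-1}\equiv1\pmod{n/m}$; (b) $s\sum_{i=1}^{k}t^{i-1}\equiv0\pmod{n/m}$; (c) $s\sum_{i=1}^{m}\big(\sum_{j=1}^{r}t^{j-1}\big)^{i-1}\equiv t-1\pmod{n/m}$. Moreover, for fixed $r$, $\Pi_{r,s,t}=\Pi_{r,s',t'}$ if and only if $s\equiv s'\pmod{n/m}$ and $s(t-t')\equiv0\pmod{n/m}$.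
   Context: A skew-morphism of a finite group $A$ is a permutation $\varphi$ of $A$ fixing the identity for which there is $\pi:A\to\mathbb{Z}_m$ ($m$ the order of $\varphi$) with $\varphi(xy)=\varphi(x)\varphi^{\pi(x)}(y)$; for an automorphism, $\pi\equiv1\pmod m$. For a positive multiple $n$ of $m$, $\Pi:A\to\mathbb{Z}_n$ is an extended power function of $\varphi$ if (i) $\Pi(x)\equiv\pi(x)\pmod m$ for all $x$; (ii) $\Pi$ of the identity is $\equiv1\pmod n$; (iii) $\Pi(xy)\equiv\sum_{i=1}^{\Pi(x)}\Pi(\varphi^{i-1}(y))\pmod n$ for all $x,y\in A$ (here $A=\mathbb{Z}_k$ is written additively, so $xy$ means $x+y$). *)

From mathcomp Require Import all_boot.
Unset Printing Implicit Defensive.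

Definition phi (k r : nat) (y : nat) : nat := (y * r) %% k.

Definition at_ (k n : nat) (P : 'I_k -> 'I_n) (x : nat) : nat :=
  if (insub (x %% k) : option (ordinal k)) is Some i then val (P i) else 0.

(* Extended power function Pi : Z_k -> Z_n of the automorphism phi (of order m);
   the power function of an automorphism is pi = 1 (mod m).
   (iii): Pi(x+y) = sum_{i=1}^{Pi(x)} Pi(phi^{i-1}(y))  (mod n),
   with Pi(x) represented in [0, n). *)
Definition ext_power_fun (k r m n : nat) (P : 'I_k -> 'I_n) : Prop :=
  [/\ forall x : 'I_k, val (P x) = 1 %[mod m],
      at_ k n P 0 = 1 %[mod n] &
      forall x y : 'I_k,
        at_ k n P (x + y) = \sum_(0 <= i < val (P x)) at_ k n P (iter i (phi k r) y) %[mod n] ].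

Definition Pi_rst (m n s t x : nat) : nat :=
  (1 + m * s * \sum_(i < x) t ^ i) %% n.

Definition admissible (k r m q s t : nat) : Prop :=
  s < q /\ t < q /\ coprime t q /\
  t ^ r.-1 = 1 %[mod q] /\
  s * (\sum_(i < k) t ^ i) = 0 %[mod q] /\
  s * (\sum_(i < m) (\sum_(j < r) t ^ j) ^ i) + 1 = t %[mod q].

(* Write Pi(x) = 1 + m g(x) (mod n) with g(x) in Z_q, q = n/m (see [level]).
   Since i |-> Pi(phi^i(y)) is m-periodic with values = 1 (mod m), the sum in
   (iii) only depends on Pi(x) mod n, and (iii) becomes the cocycle identity
   g(x+y) = g(x) + g(y) + g(x) sum_{i<m} g(y r^i) in Z_q.  With s = g(1) and
   t = 1 + sum_{i<m} g(r^i), induction on x gives g(x) = s (1 + t + ... + t^(x-1));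
   the k-periodicity of g, r^m = 1 (mod k) and the cocycle identity at (1, r)
   then yield (a)-(c), and conversely (a)-(c) make x |-> s sum_{i<x} t^i a
   k-periodic cocycle.  For q = 1 all the statements are trivial. *)

From mathcomp Require Import all_boot all_algebra ring.
Set Implicit Arguments. Unset Strict Implicit. Unset Printing Implicit Defensive.
Import GRing.Theory.

Section GeometricSum.
Variable R : comPzRingType.
Local Open Scope ring_scope.

Definition gsum (T : R) (a : nat) := \sum_(i < a) T ^+ i.

Lemma gsum0 T : gsum T 0 = 0. Proof. by rewrite /gsum big_ord0. Qed.

Lemma gsumS T a : gsum T a.+1 = 1 + T * gsum T a.
Proof.
rewrite /gsum big_ord_recl mulr_sumr; congr (_ + _).
by apply: eq_bigr => i _; rewrite exprS.
Qed.

Lemma gsum1 T : gsum T 1 = 1. Proof. by rewrite gsumS gsum0 mulr0 addr0. Qed.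

Lemma gsumD T a b : gsum T (a + b) = gsum T a + T ^+ a * gsum T b.
Proof.
elim: b => [|b IH]; first by rewrite addn0 gsum0 mulr0 addr0.
by rewrite addnS /gsum !big_ord_recr /= -/(gsum T _) IH mulrDr addrA exprD.
Qed.

Lemma expr_gsum T a : T ^+ a = 1 + (T - 1) * gsum T a.
Proof. by rewrite /gsum -subrX1 addrC subrK. Qed.

Lemma mulr_gsum_eq (s T T' : R) a : s * T = s * T' -> s * gsum T a = s * gsum T' a.
Proof.
move=> sT; have sTX i : s * T ^+ i = s * T' ^+ i.
  elim: i => [|i IH]; first by rewrite !expr0.
  by rewrite !exprSr !mulrA IH -!mulrA (mulrC _ T) (mulrC _ T') !mulrA sT.
by rewrite /gsum !mulr_sumr; apply: eq_bigr => i _; apply: sTX.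
Qed.

Section FixedPower.
Variables (s T : R) (r : nat).
Hypothesis sTr : s * T ^+ r = s * T.

Lemma mulr_exprMn z : s * T ^+ (r * z) = s * T ^+ z.
Proof.
elim: z => [|z IH]; first by rewrite muln0.
by rewrite mulnSr exprD mulrA IH -mulrA mulrCA sTr mulrCA -exprSr.
Qed.

Lemma mulr_gsumMn z : s * gsum T (r * z) = gsum T r * (s * gsum T z).
Proof.
elim: z => [|z IH]; first by rewrite muln0 !gsum0 !mulr0.
rewrite mulnSr gsumD mulrDr IH mulrA (mulrA s) mulr_exprMn /gsum big_ord_recr /=.
by rewrite -/(gsum T z); ring.
Qed.

Lemma mulr_gsumXn z i : s * gsum T (z * r ^ i) = gsum T r ^+ i * (s * gsum T z).
Proof.
elim: i => [|i IH]; first by rewrite expn0 muln1 expr0 mul1r.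
by rewrite expnS mulnCA mulr_gsumMn IH exprS mulrA.
Qed.
End FixedPower.
End GeometricSum.

Lemma natr_gsum (R : comPzRingType) (t a : nat) :
  ((\sum_(i < a) t ^ i)%:R : R)%R = gsum (t%:R) a.
Proof. by rewrite natr_sum; apply: eq_bigr => i _; rewrite natrX. Qed.

Lemma big_ord_shift1 (R : Type) (idx : R) (op : Monoid.com_law idx) (G : nat -> R) m :
  G m = G 0 -> \big[op/idx]_(i < m) G i.+1 = \big[op/idx]_(i < m) G i.
Proof.
case: m => [|m] Gm; first by rewrite !big_ord0.
by rewrite big_ord_recr big_ord_recl /= Gm Monoid.mulmC.
Qed.

Section Cocycle.
Variables (R : comUnitRingType) (k r m : nat) (g : nat -> R).
Hypotheses (k_gt0 : 0 < k) (r_gt0 : 0 < r) (rm : r ^ m = 1 %[mod k]).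
Hypotheses (g0 : g 0 = 0%R) (g_modk : forall z, g (z %% k) = g z).
Local Open Scope ring_scope.
Hypothesis g_cocycle :
  forall x y, g (x + y) = g x + g y + g x * \sum_(i < m) g (y * r ^ i).

Let S := g 1.
Let T := 1 + \sum_(i < m) g (r ^ i).

Lemma cocycle_mulrm z : g (z * r ^ m) = g z.
Proof. by rewrite -g_modk -modnMmr rm modnMmr muln1 g_modk. Qed.

Lemma cocycle_subr1 : T - 1 = \sum_(i < m) g (r ^ i).
Proof. by rewrite /T addrAC subrr add0r. Qed.

Lemma cocycle_gsum z : g z = S * gsum T z.
Proof.
elim: z => [|z IH]; first by rewrite g0 gsum0 mulr0.
have sum1 : \sum_(i < m) g (1 * r ^ i) = T - 1.
  by rewrite cocycle_subr1; under eq_bigr do rewrite mul1n.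
by rewrite -addn1 g_cocycle sum1 IH addn1 gsumS -/S; ring.
Qed.

Lemma cocycle_gsum_period : S * gsum T k = 0.
Proof. by rewrite -cocycle_gsum -g_modk modnn g0. Qed.

Lemma cocycle_unit : T \is a GRing.unit.
Proof.
have Tk : T ^+ k = 1.
  rewrite expr_gsum cocycle_subr1 mulr_suml big1 ?addr0 // => i _.
  by rewrite cocycle_gsum mulrAC cocycle_gsum_period mul0r.
by rewrite -(unitrX_pos _ k_gt0) Tk unitr1.
Qed.

Lemma cocycle_mulrX : S * T ^+ r = S * T.
Proof.
have rsum : \sum_(i < m) g (r * r ^ i) = T - 1.
  under eq_bigr do rewrite -expnS.
  rewrite (big_ord_shift1 _ (G := fun i => g (r ^ i))) ?cocycle_subr1 //=.
  by rewrite -[(r ^ m)%N]mul1n cocycle_mulrm.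
have r1 : r = r.-1.+1 :> nat by rewrite prednK.
have Ur : gsum T r = 1 + T * gsum T r.-1 by rewrite {1}r1 gsumS.
have := g_cocycle 1 r; rewrite rsum !cocycle_gsum gsum1 mulr1 add1n gsumS -/S Ur => E.
have : T * (S * ((T - 1) * gsum T r.-1)) = T * 0.
  rewrite mulr0; set G := gsum T r.-1 in E *.
  transitivity (S * (1 + T * (1 + T * G)) - (S + S * (1 + T * G) + S * (T - 1))).
    by ring.
  by rewrite E subrr.
move/(mulrI cocycle_unit) => E0.
have -> : S * T ^+ r = S * T + S * ((T - 1) * gsum T r.-1) * T.
  by rewrite {1}r1 exprSr expr_gsum; ring.
by rewrite E0 mul0r addr0.
Qed.

Lemma cocycle_power i : g (r ^ i) = gsum T r ^+ i * S.
Proof. by rewrite -[(r ^ i)%N]mul1n cocycle_gsum (mulr_gsumXn cocycle_mulrX) gsum1 mulr1. Qed.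

Lemma cocycle_eq_c : S * \sum_(i < m) gsum T r ^+ i + 1 = T.
Proof.
rewrite /T addrC mulr_sumr; congr (_ + _); apply: eq_bigr => i _.
by rewrite cocycle_power mulrC.
Qed.

Lemma cocycle_eq_a : T ^+ r.-1 = 1.
Proof.
set U := gsum T r.
have U1 : U - 1 = T * gsum T r.-1 by rewrite /U -{1}(prednK r_gt0) gsumS addrAC subrr add0r.
have UmS : U ^+ m * S = S by rewrite -cocycle_power -[(r ^ m)%N]mul1n cocycle_mulrm.
have : T * (gsum T r.-1 * (S * \sum_(i < m) U ^+ i)) = T * 0.
  by rewrite mulr0 mulrA -U1 mulrCA -subrX1 mulrBr mulrC UmS mulr1 subrr.
have ScT : S * \sum_(i < m) U ^+ i = T - 1.
  by rewrite -[X in _ = X - 1]cocycle_eq_c addrK.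
move/(mulrI cocycle_unit); rewrite ScT => E.
by rewrite expr_gsum mulrC E addr0.
Qed.
End Cocycle.

Section CocycleConverse.
Variable R : comPzRingType.
Local Open Scope ring_scope.

Lemma mulr_gsum_modn (S T : R) k z : S * gsum T k = 0 -> S * gsum T (z %% k) = S * gsum T z.
Proof.
move=> Sk; have Skj j : S * gsum T (j * k) = 0.
  elim: j => [|j IH]; first by rewrite mul0n gsum0 mulr0.
  by rewrite mulSn gsumD mulrDr Sk add0r mulrCA IH mulr0.
by rewrite [in RHS](divn_eq z k) addnC gsumD mulrDr mulrCA Skj mulr0 addr0.
Qed.

Lemma gsum_cocycle (S T : R) r m x y :
  S * T ^+ r = S * T -> S * \sum_(i < m) gsum T r ^+ i + 1 = T ->
  S * gsum T (x + y) =
    S * gsum T x + S * gsum T y + S * gsum T x * \sum_(i < m) S * gsum T (y * r ^ i).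
Proof.
move=> sTr Tc; under eq_bigr do rewrite (mulr_gsumXn sTr).
rewrite -mulr_suml gsumD expr_gsum -[X in X - 1]Tc addrK; ring.
Qed.
End CocycleConverse.

Lemma eqZp_nat p a b : 1 < p -> (a%:R = b%:R :> 'Z_p)%R <-> a = b %[mod p].
Proof. by move=> p_gt1; split => [/(congr1 val)|e]; [|apply: val_inj]; rewrite /= !val_Zp_nat. Qed.

Lemma sum_periodic_mul (G : nat -> nat) m j : (forall i, G (i + m) = G i) ->
  \sum_(i < m * j) G i = j * \sum_(i < m) G i.
Proof.
elim: j G => [|j IH] G Gm; first by rewrite muln0 big_ord0.
rewrite mulnS big_split_ord /= (IH (fun i => G (m + i))) => [|i]; last by rewrite addnA Gm.
by rewrite mulSn; congr (_ + _ * _); apply: eq_bigr => i _; rewrite addnC Gm.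
Qed.

Lemma dvdn_sum_congr1 (G : nat -> nat) m : (forall i, G i = 1 %[mod m]) -> m %| \sum_(i < m) G i.
Proof.
move=> G1; rewrite /dvdn -modn_summ; under eq_bigr do rewrite G1.
by rewrite sum_nat_const card_ord modnMr.
Qed.

Section Level.
Variables m n : nat.
Hypotheses (m_gt0 : 0 < m) (n_gt0 : 0 < n) (m_dvd_n : m %| n).

(* The [+ n] avoids the truncated subtraction at [v = 0], which is a valid
   value when [m = 1]. *)
Definition level v := (v + n - 1) %/ m.

Lemma level_spec v : v = 1 %[mod m] -> v + n = 1 + m * level v.
Proof.
move=> v1; have : m %| v + n - 1.
  by rewrite -eqn_mod_dvd ?addn_gt0 ?n_gt0 ?orbT // -modnDmr (eqP m_dvd_n) addn0 v1.
by rewrite /level mulnC => /divnK ->; rewrite subnKC // addn_gt0 n_gt0 orbT.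
Qed.

Lemma eq_mod_addn_mull p a b : p + m * a = p + m * b %[mod n] <-> a = b %[mod n %/ m].
Proof.
have nE : n = m * (n %/ m) by rewrite mulnC divnK.
split => [/eqP|ab]; [|apply/eqP]; rewrite eqn_modDl {1 2}nE -!muln_modr.
  by rewrite eqn_pmul2l // => /eqP.
by rewrite ab.
Qed.

Lemma eq_mod_level v a : 1 < n %/ m -> v = 1 %[mod m] ->
  v = 1 + m * a %[mod n] <-> ((level v)%:R = a%:R :> 'Z_(n %/ m))%R.
Proof.
by move=> q_gt1 v1; rewrite eqZp_nat // -(eq_mod_addn_mull 1) -(level_spec v1) modnDr.
Qed.

Lemma sum_mod_period (G : nat -> nat) N : (forall i, G (i + m) = G i) ->
  (forall i, G i = 1 %[mod m]) -> \sum_(i < N + n) G i = \sum_(i < N) G i %[mod n].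
Proof.
move=> Gm G1; have Nq : \sum_(i < n) G (N + i) = n %/ m * \sum_(i < m) G (N + i).
  have := @sum_periodic_mul (fun i => G (N + i)) m (n %/ m).
  by rewrite (mulnC m) divnK //; apply=> i; rewrite addnA Gm.
rewrite big_split_ord /= Nq.
have /dvdnP[c ->] := dvdn_sum_congr1 (fun i => G1 (N + i)).
by rewrite mulnCA divnK // addnC modnMDl.
Qed.

Lemma sum_level (G : nat -> nat) v : (forall i, G (i + m) = G i) ->
  (forall i, G i = 1 %[mod m]) -> v = 1 %[mod m] ->
  \sum_(i < v) G i =
    1 + m * (level v + level (G 0) + level v * \sum_(i < m) level (G i)) %[mod n].
Proof.
move=> Gm G1 v1; have e0 := level_spec (G1 0).
have eS : \sum_(i < m) G i + m * n = m + m * \sum_(i < m) level (G i).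
  transitivity (\sum_(i < m) (G i + n)); first by rewrite big_split /= sum_nat_const card_ord.
  under eq_bigr do rewrite level_spec //.
  by rewrite big_split /= sum_nat_const card_ord muln1 big_distrr.
rewrite -(sum_mod_period v Gm G1) (level_spec v1) big_ord_recl /=.
rewrite (@sum_periodic_mul (fun i => G i.+1)) => [|i]; last by rewrite -addSn Gm.
rewrite (big_ord_shift1 _ (G := G)); last by rewrite -{1}[m]add0n Gm.
set lv := level v; set Gs := \sum_(i < m) G i.
suff -> : 1 + m * (lv + level (G 0) + lv * \sum_(i < m) level (G i)) =
          (1 + lv * m) * n + (G 0 + lv * Gs) by rewrite modnMDl.
transitivity ((G 0 + n) + lv * (Gs + m * n)); first by rewrite e0 eS; ring.
ring.
Qed.
End Level.

Lemma admissibleE k r m q s t : 1 < q -> s < q -> t < q ->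
  admissible k r m q s t <->
  [/\ (t%:R : 'Z_q)%R \is a GRing.unit, ((t%:R : 'Z_q) ^+ r.-1 = 1)%R,
      (s%:R * gsum (t%:R : 'Z_q) k = 0)%R
    & (s%:R * \sum_(i < m) gsum (t%:R : 'Z_q) r ^+ i + 1 = t%:R)%R].
Proof.
move=> q_gt1 s_lt t_lt; rewrite /admissible coprime_sym -unitZpE // -!eqZp_nat //.
rewrite natrX natrM natr_gsum natrD natrM natr_sum.
under [in X in _ <-> X]eq_bigr do rewrite -natr_gsum -natrX.
by split=> [[_ [_ [? [? [? ?]]]]]|[? ? ? ?]].
Qed.

Section PowerFunction.
Variables (k r m n : nat).
Hypotheses (k_gt0 : 0 < k) (m_gt0 : 0 < m) (n_gt0 : 0 < n) (m_dvd_n : m %| n).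
Hypothesis rm : r ^ m = 1 %[mod k].
Variable P : 'I_k -> 'I_n.
Local Notation F := (at_ k n P).

Lemma at_mod x : F (x %% k) = F x. Proof. by rewrite /at_ modn_mod. Qed.

Lemma at_ord (i : 'I_k) : F i = val (P i).
Proof. by rewrite /at_ (modn_small (ltn_ord i)) valK. Qed.

Lemma at_val x : F x = val (P (Ordinal (ltn_pmod x k_gt0))).
Proof. by rewrite -at_mod -at_ord. Qed.

Lemma at_iter i y : F (iter i (phi k r) y) = F (y * r ^ i).
Proof.
rewrite -at_mod -[F (y * _)]at_mod; congr F.
elim: i => [|i IH]; first by rewrite muln1.
by rewrite iterS /phi modn_mod -modnMml IH modnMml expnSr mulnA.
Qed.

Lemma at_mulrm z : F (z * r ^ m) = F z.
Proof. by rewrite -at_mod -modnMmr rm modnMmr muln1 at_mod. Qed.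

Lemma ext_power_fun_natE : ext_power_fun k r m n P <->
  [/\ forall z, F z = 1 %[mod m], F 0 = 1 %[mod n]
    & forall x y, F (x + y) = \sum_(i < F x) F (y * r ^ i) %[mod n]].
Proof.
split=> [[F1 F0 Fiii]|[F1 F0 Fiii]]; split=> //.
- by move=> z; rewrite at_val F1.
- move=> x y; have := Fiii (Ordinal (ltn_pmod x k_gt0)) (Ordinal (ltn_pmod y k_gt0)).
  rewrite /= -at_val -[F (x + y)]at_mod -modnDm at_mod big_mkord => ->.
  by congr (_ %% n); apply: eq_bigr => i _; rewrite at_iter -at_mod modnMml at_mod.
- by move=> x; rewrite -at_ord F1.
- by move=> x y; rewrite big_mkord -at_ord; under eq_bigr do rewrite at_iter.
Qed.

Lemma Pi_rst_mod_m s t x : Pi_rst m n s t x = 1 %[mod m].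
Proof. by rewrite /Pi_rst modn_dvdm // -mulnA addnC mulnC modnMDl. Qed.

Section Coordinates.
Hypothesis q_gt1 : 1 < n %/ m.
Local Notation lvl z := ((level m n (F z))%:R : 'Z_(n %/ m))%R.
Local Open Scope ring_scope.

Lemma at_level0 : (F 0 = 1 %[mod m])%N -> (F 0 = 1 %[mod n])%N <-> lvl 0 = 0.
Proof. by move=> F1; have := eq_mod_level m_gt0 n_gt0 m_dvd_n 0 q_gt1 F1; rewrite muln0 addn0. Qed.

Lemma at_cocycle x y : (forall z, F z = 1 %[mod m])%N ->
  (F (x + y) = \sum_(i < F x) F (y * r ^ i) %[mod n])%N <->
  lvl (x + y) = lvl x + lvl y + lvl x * \sum_(i < m) lvl (y * r ^ i).
Proof.
move=> F1; have Gm i : F (y * r ^ (i + m)) = F (y * r ^ i) by rewrite expnD mulnA at_mulrm.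
rewrite (sum_level n_gt0 m_dvd_n Gm) // expn0 muln1 eq_mod_level //.
by rewrite !natrD natrM natr_sum.
Qed.

Lemma at_Pi_rst s t x : (F x = 1 %[mod m])%N ->
  F x = Pi_rst m n s t x <-> lvl x = s%:R * gsum t%:R x.
Proof.
move=> F1; rewrite -natr_gsum -natrM -eq_mod_level // modn_small ?mulnA //.
by rewrite at_val ltn_ord.
Qed.

Lemma eq_Pi_rst s t s' t' x :
  Pi_rst m n s t x = Pi_rst m n s' t' x <->
  s%:R * gsum t%:R x = s'%:R * gsum t'%:R x :> 'Z_(n %/ m).
Proof. by rewrite /Pi_rst -!mulnA eq_mod_addn_mull // -eqZp_nat // !natrM !natr_gsum. Qed.

Lemma ext_power_fun_Pi_rst : (0 < r)%N -> ext_power_fun k r m n P ->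
  exists s t, admissible k r m (n %/ m) s t /\
              forall x : 'I_k, val (P x) = Pi_rst m n s t x.
Proof.
move=> r_gt0 /ext_power_fun_natE[F1 /(at_level0 (F1 0)) g0 Fiii].
have gk z : lvl (z %% k) = lvl z by rewrite at_mod.
have gco x y := proj1 (at_cocycle x y F1) (Fiii x y).
have ltq (X : 'Z_(n %/ m)) : (X < n %/ m)%N by rewrite -[X in (_ < X)%N]Zp_cast.
set S := lvl 1; set T := 1 + \sum_(i < m) lvl (r ^ i).
exists S, T; split.
  apply/admissibleE; rewrite ?natr_Zp //; split.
  - exact: (cocycle_unit (g := fun z => lvl z) k_gt0 g0 gk gco).
  - exact: (cocycle_eq_a (g := fun z => lvl z) k_gt0 r_gt0 rm g0 gk gco).
  - exact: (cocycle_gsum_period (g := fun z => lvl z) g0 gk gco).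
  - exact: (cocycle_eq_c (g := fun z => lvl z) k_gt0 r_gt0 rm g0 gk gco).
by move=> x; rewrite -at_ord at_Pi_rst // !natr_Zp; apply: (cocycle_gsum g0 gco).
Qed.

Lemma Pi_rst_ext_power_fun s t : (0 < r)%N -> admissible k r m (n %/ m) s t ->
  (forall x : 'I_k, val (P x) = Pi_rst m n s t x) -> ext_power_fun k r m n P.
Proof.
move=> r_gt0 adm hP; have [s_lt [t_lt _]] := adm.
have [_ Ta Sk Sc] := (admissibleE k r m q_gt1 s_lt t_lt).1 adm.
have FPi z : F z = Pi_rst m n s t (z %% k) by rewrite at_val hP.
have F1 z : (F z = 1 %[mod m])%N by rewrite FPi Pi_rst_mod_m.
have lvlE z : lvl z = s%:R * gsum t%:R z.
  by rewrite -at_mod -(mulr_gsum_modn _ Sk); apply/at_Pi_rst; rewrite // FPi modn_mod.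
apply/ext_power_fun_natE; split=> //.
  by apply/at_level0; rewrite // lvlE gsum0 mulr0.
move=> x y; apply/at_cocycle => //; rewrite !lvlE; under eq_bigr do rewrite lvlE.
by apply: gsum_cocycle; rewrite // -(prednK r_gt0) exprS Ta mulr1.
Qed.

Lemma eq_Pi_rst_params s t s' t' : (0 < r <= k)%N -> coprime r k ->
  (forall j, 0 < j < m -> r ^ j != 1 %[mod k])%N ->
  admissible k r m (n %/ m) s t -> admissible k r m (n %/ m) s' t' ->
  (forall x : 'I_k, Pi_rst m n s t x = Pi_rst m n s' t' x) <->
  (s = s' %[mod n %/ m] /\ s * t = s * t' %[mod n %/ m])%N.
Proof.
move=> /andP[r_gt0 r_le_k] r_coprime m_min adm adm'.
have [s_lt [t_lt _]] := adm; have [s'_lt [t'_lt _]] := adm'.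
have [_ _ Sk Sc] := (admissibleE k r m q_gt1 s_lt t_lt).1 adm.
have [_ _ S'k S'c] := (admissibleE k r m q_gt1 s'_lt t'_lt).1 adm'.
rewrite -!eqZp_nat // !natrM.
set S := s%:R : 'Z_(n %/ m) in Sk Sc *; set T := t%:R : 'Z_(n %/ m) in Sk Sc *.
set S' := s'%:R : 'Z_(n %/ m) in S'k S'c *; set T' := t'%:R : 'Z_(n %/ m) in S'k S'c *.
split=> [eqPi|[SS' ST] x]; last by apply/eq_Pi_rst; rewrite -/S' -SS'; apply: mulr_gsum_eq.
have E x : (x < k)%N -> S * gsum T x = S' * gsum T' x.
  by move=> x_lt; apply/eq_Pi_rst; apply: (eqPi (Ordinal x_lt)).
have gsum2 (U : 'Z_(n %/ m)) : gsum U 2 = 1 + U by rewrite gsumS gsum1 mulr1.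
case: (ltngtP k 2) => [k_lt2 | k_gt2 | k2].
- have k1 : k = 1%N by apply/eqP; rewrite eqn_leq -ltnS k_lt2 k_gt0.
  by move: Sk S'k; rewrite k1 !gsum1 !mulr1 => -> ->; rewrite !mul0r.
- have SS' : S = S' by have := E 1%N (ltnW k_gt2); rewrite !gsum1 !mulr1.
  by have := E 2%N k_gt2; rewrite !gsum2 -SS' !mulrDr !mulr1 => /addrI ->.
- (* k = 2 forces r = m = 1, and then (c) determines t from s. *)
  have r1 : r = 1%N.
    apply/eqP; rewrite eqn_leq r_gt0 andbT -ltnS ltn_neqAle -k2 r_le_k andbT.
    by apply: contraTneq r_coprime => ->; rewrite k2.
  have m1 : m = 1%N.
    apply/eqP; rewrite eqn_leq m_gt0 andbT leqNgt; apply/negP => m_gt1.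
    by have := m_min 1%N; rewrite m_gt1 r1 exp1n eqxx => /(_ isT).
  have SS' : S = S' by have := E 1%N; rewrite k2 !gsum1 !mulr1; apply.
  subst r m; move: Sc S'c; rewrite !big_ord1 !expr0 !mulr1 => <- <-.
  by rewrite SS'.
Qed.
End Coordinates.

Section TrivialQuotient.
Hypothesis q1 : n %/ m = 1.

Lemma Pi_rst_q1 s t x : Pi_rst m n s t x = 1 %% n.
Proof.
have nm : n = m by rewrite -(divnK m_dvd_n) q1 mul1n.
by rewrite /Pi_rst nm -mulnA addnC mulnC modnMDl.
Qed.

Lemma ext_power_fun_q1 : ext_power_fun k r m n P <-> forall x : 'I_k, val (P x) = 1 %% n.
Proof.
have nm : n = m by rewrite -(divnK m_dvd_n) q1 mul1n.
split=> [[P1 _ _] x | P1].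
  by have := P1 x; rewrite -nm (modn_small (valP (P x))).
have F1 z : F z = 1 %% n by rewrite at_val P1.
split.
- by move=> x; rewrite -at_ord F1 nm modn_mod.
- by rewrite F1 modn_mod.
- move=> x y; rewrite F1 big_mkord; under eq_bigr do rewrite F1.
  by rewrite sum_nat_const card_ord -at_ord F1 modnMm muln1 modn_mod.
Qed.
End TrivialQuotient.
End PowerFunction.

Theorem lemma5p2 (k r m n : nat)
  (hk : 0 < k) (hr : 0 < r <= k) (hrk : coprime r k)
  (hm : 0 < m) (hrm : r ^ m = 1 %[mod k])
  (hmin : forall j, 0 < j < m -> r ^ j != 1 %[mod k])
  (hn : 0 < n) (hmn : m %| n) :
  (forall P : 'I_k -> 'I_n,
     ext_power_fun k r m n P <->
     exists s t, admissible k r m (n %/ m) s t /\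
                 forall x : 'I_k, val (P x) = Pi_rst m n s t x)
  /\
  (forall s t s' t',
     admissible k r m (n %/ m) s t -> admissible k r m (n %/ m) s' t' ->
     ((forall x : 'I_k, Pi_rst m n s t x = Pi_rst m n s' t' x) <->
      (s = s' %[mod n %/ m] /\ s * t = s * t' %[mod n %/ m]))).
Proof.
have r_gt0 : 0 < r by case/andP: hr.
have [q_lt1|q_gt1|q1] := ltngtP (n %/ m) 1.
- by move: q_lt1; rewrite ltnNge divn_gt0 // dvdn_leq.
- split=> [P|s t s' t']; last exact: eq_Pi_rst_params.
  split; first exact: ext_power_fun_Pi_rst.
  by case=> s [t [adm hP]]; apply: Pi_rst_ext_power_fun adm hP.
- split=> [P|s t s' t' _ _]; last by rewrite q1 !modn1; split=> // _ x; rewrite !Pi_rst_q1.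
  rewrite ext_power_fun_q1 //; split=> [P1|[s [t [_ hP]]] x]; last by rewrite hP Pi_rst_q1.
  exists 0, 0; split=> [|x]; last by rewrite P1 Pi_rst_q1.
  by rewrite /admissible q1 !modn1.
Qed.
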